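(* Let $G$ be a bipartite graph with parts $X$ and $Y$ such that every vertex in $Y$ has degree at least $(|X|+|Y|)/2$. Then $G$ contains a path covering $2|Y|$ vertices. *)

From mathcomp Require Import all_boot.
Set Implicit Arguments. Unset Strict Implicit. Unset Printing Implicit Defensive.

Definition simple_graph (T : finType) (e : rel T) : Prop :=
  symmetric e /\ irreflexive e.

Definition bipartite_with_parts (T : finType) (e : rel T) (X Y : {set T}) : Prop :=
  [/\ X :|: Y = setT, [disjoint X & Y] &
      forall u v, e u v -> (u \in X) && (v \in Y) || (u \in Y) && (v \in X)].

Definition deg (T : finType) (e : rel T) (v : T) : nat := #|[set w | e v w]|.

Definition is_gpath (T : finType) (e : rel T) (p : seq T) : bool :=
  uniq p && (if p is x :: q then path e x q else true).

(* Any two vertices of Y have at least |Y| common neighbours: both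
   neighbourhoods lie in X and their sizes add up to at least |X| + |Y|.
   Listing Y as y_1, ..., y_k, choose x_k adjacent to y_k and then, going
   backwards, x_i a common neighbour of y_i and y_(i+1) different from
   x_(i+1), ..., x_k; fewer than |Y| vertices are excluded, so the choice is
   always possible, and y_1 x_1 y_2 x_2 ... y_k x_k is the required path. *)
From mathcomp Require Import all_boot.
From mathcomp Require Import zify.

Set Implicit Arguments.
Unset Strict Implicit.
Unset Printing Implicit Defensive.

Definition common_nbrs (T : finType) (e : rel T) (y y' : T) : {set T} :=
  [set x | e y x & e y' x].

Section AlternatingPath.

Variables (T : finType) (e : rel T) (Y : {set T}) (m : nat).
Hypothesis e_sym : symmetric e.
Hypothesis Y_indep : {in Y &, forall y y', ~~ e y y'}.
Hypothesis common_nbrs_ge : {in Y &, forall y y', m <= #|common_nbrs e y y'|}.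

Lemma nbr_notin_indep y x : y \in Y -> e y x -> x \notin Y.
Proof. by move=> yY yx; apply: contraTN yx => /(Y_indep yY). Qed.

Lemma extend_path y y1 q :
    y \in Y -> y1 \in Y -> y \notin y1 :: q -> is_gpath e (y1 :: q) ->
    count [predC Y] q < m ->
  exists2 x, x \notin Y & is_gpath e [:: y, x, y1 & q].
Proof.
move=> yY y1Y yNp /andP[uniq_p path_p] count_lt.
have /subsetPn[x Cx xNq] : ~~ (common_nbrs e y y1 \subset [set z in q]).
  apply: contraTN count_lt => /subsetP C_q; rewrite -leqNgt.
  apply: leq_trans (common_nbrs_ge yY y1Y) _.
  rewrite cardE -size_filter; apply: uniq_leq_size; first exact: enum_uniq.
  move=> z; rewrite mem_enum mem_filter => Cz.
  have := C_q z Cz; rewrite inE => ->; rewrite andbT.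
  by move: Cz; rewrite inE => /andP[/(nbr_notin_indep yY)].
move: Cx xNq; rewrite !inE => /andP[yx y1x] xNq.
have xNY := nbr_notin_indep yY yx.
have xNp : x \notin y1 :: q.
  by rewrite inE negb_or xNq andbT; apply: contraNneq xNY => ->.
have yNx : y != x by apply: contraNneq xNY => <-.
exists x => //; apply/andP; split; last by rewrite /= yx e_sym y1x.
by rewrite cons_uniq in_cons negb_or yNx yNp cons_uniq xNp uniq_p.
Qed.

Lemma alternating_path y ys :
    uniq (y :: ys) -> {subset y :: ys <= Y} -> size (y :: ys) <= m ->
  exists q, [/\ is_gpath e (y :: q), size (y :: q) = 2 * size (y :: ys)
              & [seq z <- q | z \in Y] = ys].
Proof.
elim: ys y => [|y1 ys IH] y uniq_ys sub_ys size_ys.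
  have yY : y \in Y by apply: sub_ys; rewrite mem_head.
  have /card_gt0P[x] : 0 < #|common_nbrs e y y|.
    by apply: leq_trans (common_nbrs_ge yY yY).
  rewrite inE andbb => yx; have xNY := nbr_notin_indep yY yx.
  exists [:: x]; split => //=; last by rewrite (negbTE xNY).
  by rewrite /is_gpath /= yx inE !andbT; apply: contraNneq xNY => <-.
have yY : y \in Y by apply: sub_ys; rewrite mem_head.
have y1Y : y1 \in Y by apply: sub_ys; rewrite !inE eqxx orbT.
move: uniq_ys => /= /andP[yNys /andP[y1Nys uniq_ys]].
have [q [path_q size_q filter_q]] : exists q, [/\ is_gpath e (y1 :: q),
    size (y1 :: q) = 2 * size (y1 :: ys) & [seq z <- q | z \in Y] = ys].
  apply: IH => /=; first by rewrite y1Nys.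
    by move=> z z_ys; apply: sub_ys; rewrite inE z_ys orbT.
  by move: size_ys => /=; lia.
have yNp : y \notin y1 :: q.
  move: yNys; rewrite !in_cons !negb_or => /andP[-> yNys] /=.
  by apply: contra yNys => yq; rewrite -filter_q mem_filter yY.
have count_q : count [predC Y] q = (size ys).+1.
  have : size ys + count [predC Y] q = size q.
    by rewrite -filter_q size_filter; apply: count_predC.
  by move: size_q => /=; lia.
have [|x xNY path_x] := extend_path yY y1Y yNp path_q.
  by rewrite count_q; move: size_ys => /=; lia.
exists [:: x, y1 & q]; split => //=; first by move: size_q => /=; lia.
by rewrite (negbTE xNY) y1Y filter_q.
Qed.

End AlternatingPath.

Section Bipartite.

Variables (T : finType) (e : rel T) (X Y : {set T}).
Hypothesis e_bip : bipartite_with_parts e X Y.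

Lemma bipartite_nbr_in y w : y \in Y -> e y w -> w \in X.
Proof.
case: e_bip => _ disjXY adj yY /adj; rewrite yY /= => /orP[/andP[yX _] | //].
by move: (disjointFr disjXY yX); rewrite yY.
Qed.

Lemma bipartite_indep : {in Y &, forall y y', ~~ e y y'}.
Proof.
move=> y y' yY y'Y; apply/negP => /(bipartite_nbr_in yY) y'X.
by case: e_bip => _ /disjointFr/(_ y'X); rewrite y'Y.
Qed.

Lemma bipartite_common_nbrs_ge :
    (forall y, y \in Y -> #|X| + #|Y| <= 2 * deg e y) ->
  {in Y &, forall y y', #|Y| <= #|common_nbrs e y y'|}.
Proof.
move=> deg_ge y y' yY y'Y.
have -> : common_nbrs e y y' = [set w | e y w] :&: [set w | e y' w].
  by apply/setP => w; rewrite !inE.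
have : #|[set w | e y w] :|: [set w | e y' w]| <= #|X|.
  apply/subset_leq_card/subsetP => w; rewrite !inE.
  by case/orP; [apply: bipartite_nbr_in yY | apply: bipartite_nbr_in y'Y].
have := cardsUI [set w | e y w] [set w | e y' w].
by have := deg_ge y yY; have := deg_ge y' y'Y; rewrite /deg; lia.
Qed.

End Bipartite.

Theorem lemma2p2 (T : finType) (e : rel T) (X Y : {set T}) :
  simple_graph e ->
  bipartite_with_parts e X Y ->
  (forall y, y \in Y -> #|X| + #|Y| <= 2 * deg e y) ->
  exists p : seq T, is_gpath e p /\ size p = 2 * #|Y|.
Proof.
move=> [e_sym _] e_bip deg_ge.
case enumY: (enum Y) => [|y ys]; first by exists [::]; rewrite cardE enumY.
have sizeY : size (y :: ys) = #|Y| by rewrite -enumY cardE.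
have [|||q [path_q size_q _]] := alternating_path e_sym (bipartite_indep e_bip)
    (bipartite_common_nbrs_ge e_bip deg_ge) (y := y) (ys := ys).
- by rewrite -enumY enum_uniq.
- by move=> z; rewrite -enumY mem_enum.
- by rewrite sizeY.
by exists (y :: q); rewrite size_q sizeY.
Qed.
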